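(* Let $k\ge 1$ and $1\le m\le k$, and let $v_0,\pi_1,v_1,\dots,\pi_k$ be generated by Approximate Value Iteration with errors $\epsilon_1,\dots,\epsilon_{k-1}$ (for any choice of greedy policies). Let $\epsilon=\max_{1\le j<k}\operatorname{span}(\epsilon_j)$ (with $\epsilon=0$ if $k=1$). Let $\pi_{k,m}$ be the periodic non-stationary policy $\pi_k\,\pi_{k-1}\cdots\pi_{k-m+1}\,\pi_k\,\pi_{k-1}\cdots\pi_{k-m+1}\cdots$. Then $$\|v_*-v_{\pi_{k,m}}\|_\infty \le \frac{1}{1-\gamma^m}\left(\frac{\gamma-\gamma^k}{1-\gamma}\,\epsilon+\gamma^k\operatorname{span}(v_*-v_0)\right).$$
   Context: A Markov Decision Process with finite state space $S$, finite action space $A$, reward function $r(s,a)$, transition probabilities $p(s'|s,a)$ and discount factor $\gamma\in[0,1)$. For a (deterministic, stationary) policy $\pi:S\to A$, let $r_\pi(s)=r(s,\pi(s))$, let $P_\pi$ be the stochastic matrix $P_\pi(s,s')=p(s'|s,\pi(s))$, and let $T_\pi v=r_\pi+\gamma P_\pi v$ be the Bellman operator of $\pi$; $v_\pi$ is its unique fixed point (the expected $\gamma$-discounted total reward of $\pi$). The Bellman optimality operator is $Tv=\max_\pi T_\pi v$ (componentwise), $v_*$ is its fixed point (the optimal value), and a policy $\pi$ is greedy with respect to $v$ if $T_\pi v=Tv$. For a function $f:S\to\mathbb R$, $\operatorname{span}(f)=\max_s f(s)-\min_s f(s)$. Approximate Value Iteration: starting from an arbitrary $v_0:S\to\mathbb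 R$, for $j\ge 0$ pick any policy $\pi_{j+1}$ greedy with respect to $v_j$ and set $v_{j+1}=T_{\pi_{j+1}}v_j+\epsilon_{j+1}$, where $\epsilon_{j+1}:S\to\mathbb R$ are arbitrary error terms. A non-stationary policy $\sigma_0\sigma_1\sigma_2\cdots$ uses policy $\sigma_t$ at time $t$; its value is the expected $\gamma$-discounted total reward $v=\sum_{t\ge0}\gamma^t P_{\sigma_0}\cdots P_{\sigma_{t-1}} r_{\sigma_t}$. For the periodic policy $\pi_{k,m}$ this value satisfies $v_{\pi_{k,m}}=T_{\pi_k}T_{\pi_{k-1}}\cdots T_{\pi_{k-m+1}}v_{\pi_{k,m}}$. *)

From HB Require Import structures.
From mathcomp Require Import all_boot all_order all_algebra.
Set Implicit Arguments. Unset Strict Implicit. Unset Printing Implicit Defensive.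
Import Order.TTheory GRing.Theory Num.Theory.
Local Open Scope ring_scope.

Section MDP.
Variables (R : realFieldType) (S A : finType).

(* A finite MDP: rewards r, transition kernel p (p s a s' = p(s'|s,a)), discount gamma. *)
Record mdp := MDP {
  rew : S -> A -> R;
  trans : S -> A -> S -> R;
  gamma : R }.

Definition is_mdp (M : mdp) : Prop :=
  (forall s a s', 0 <= trans M s a s') /\
  (forall s a, \sum_(s' : S) trans M s a s' = 1) /\
  0 <= gamma M /\ gamma M < 1.

Definition qval (M : mdp) (v : S -> R) (s : S) (a : A) : R :=
  rew M s a + gamma M * \sum_(s' : S) trans M s a s' * v s'.

Definition Tpi (M : mdp) (pi : S -> A) (v : S -> R) : S -> R :=
  fun s => qval M v s (pi s).

Definition is_max_over (q : A -> R) (x : R) : Prop :=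
  (exists a, x = q a) /\ (forall a, q a <= x).

Definition is_Toptimal (M : mdp) (v w : S -> R) : Prop :=
  forall s, is_max_over (qval M v s) (w s).

Definition is_optimal_value (M : mdp) (vstar : S -> R) : Prop :=
  is_Toptimal M vstar vstar.

Definition greedy (M : mdp) (pi : S -> A) (v : S -> R) : Prop :=
  is_Toptimal M v (Tpi M pi v).

Definition avi_run (M : mdp) (k : nat) (v : nat -> S -> R) (pi : nat -> S -> A)
    (eps : nat -> S -> R) : Prop :=
  (forall j, (j < k)%N -> greedy M (pi j.+1) (v j)) /\
  (forall j, (j.+1 < k)%N -> v j.+1 = (fun s => Tpi M (pi j.+1) (v j) s + eps j.+1 s)).

Definition sup_norm (f : S -> R) : R := \big[Num.max/0]_(s : S) `|f s|.

(* fspan f = span f = max_s f s - min_s f s, written as max_{s,t} (f s - f t)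
   (the two coincide; both are 0 for an empty state space). *)
Definition fspan (f : S -> R) : R :=
  \big[Num.max/0]_(s : S) \big[Num.max/0]_(t : S) (f s - f t).

(* T_{pi_{k-m+1+i-1}} ... T_{pi_{k-m+1}} w ; for i = m this is
   T_{pi_k} T_{pi_{k-1}} ... T_{pi_{k-m+1}} w. *)
Fixpoint Tcycle (M : mdp) (pi : nat -> S -> A) (k m i : nat) (w : S -> R) : S -> R :=
  match i with
  | 0 => w
  | i'.+1 => Tpi M (pi (k - m + 1 + i')%N) (Tcycle M pi k m i' w)
  end.

(* value of the periodic non-stationary policy pi_{k,m}: the (unique) fixed point of
   T_{pi_k} ... T_{pi_{k-m+1}}. *)
Definition is_periodic_value (M : mdp) (pi : nat -> S -> A) (k m : nat) (w : S -> R) : Prop :=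
  w = Tcycle M pi k m m w.

End MDP.

From HB Require Import structures.
From mathcomp Require Import all_boot all_order all_algebra.
From mathcomp Require Import ring lra zify.
Import Order.TTheory GRing.Theory Num.Theory.
Set Implicit Arguments. Unset Strict Implicit. Unset Printing Implicit Defensive.
Local Open Scope ring_scope.

(** Let w_j be v* pushed through T_{pi_{k-m+1}}, ..., T_{pi_j}, so that w_j = v*
    for j <= k - m and w_k = T_{pi_k} ... T_{pi_{k-m+1}} v*. The sum of one-sided
    gaps (v* - v_j)(s) + (v_j - w_j)(t), at two arbitrary states s and t,
    contracts by gamma at each iteration: greediness of pi_{j+1} bounds the first
    gap, and T_pi v* <= v* bounds the second. The error only adds
    eps_{j+1}(t) - eps_{j+1}(s) <= span eps_{j+1}; evaluating the gaps at
    different states is what makes spans, not sup norms, appear. After k steps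
    0 <= v* - w_k <= B, with B the bracket of the theorem. Since
    T_{pi_k} ... T_{pi_{k-m+1}} is a monotone gamma^m-contraction with fixed
    point v_{pi_{k,m}}, the gap v* - v_{pi_{k,m}} lies in [0, B / (1 - gamma^m)]. *)

Section Averages.
Variables (R : realFieldType) (S : finType) (p : S -> R).
Hypotheses (p_ge0 : forall u, 0 <= p u) (p_sum1 : \sum_u p u = 1).

Lemma avg_le (f : S -> R) (b : R) : (forall u, f u <= b) -> \sum_u p u * f u <= b.
Proof.
move=> fb; apply: le_trans (ler_sum _ (fun u _ => ler_wpM2l (p_ge0 u) (fb u))) _.
by rewrite -mulr_suml p_sum1 mul1r.
Qed.

Lemma avg_ge (f : S -> R) (a : R) : (forall u, a <= f u) -> a <= \sum_u p u * f u.
Proof.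
move=> fa; apply: le_trans _ (ler_sum _ (fun u _ => ler_wpM2l (p_ge0 u) (fa u))).
by rewrite -mulr_suml p_sum1 mul1r.
Qed.

Lemma avg_addl (f : S -> R) (c : R) : \sum_u p u * (c + f u) = c + \sum_u p u * f u.
Proof.
under eq_bigr do rewrite mulrDr.
by rewrite big_split /= -mulr_suml p_sum1 mul1r.
Qed.

End Averages.

Lemma avg2_le (R : realFieldType) (S : finType) (p q f h : S -> R) (c : R) :
  (forall u, 0 <= p u) -> \sum_u p u = 1 ->
  (forall u, 0 <= q u) -> \sum_u q u = 1 ->
  (forall u u', f u + h u' <= c) ->
  \sum_u p u * f u + \sum_u q u * h u <= c.
Proof.
move=> p0 p1 q0 q1 fh.
rewrite addrC -(avg_addl p1); apply: avg_le => // u.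
by rewrite addrC -(avg_addl q1); apply: avg_le => // u'; rewrite addrC.
Qed.

Lemma le_fspan (R : realFieldType) (S : finType) (f : S -> R) (s t : S) :
  f s - f t <= fspan f.
Proof.
apply: le_trans (le_bigmax _ (fun s' => \big[Num.max/0]_t' (f s' - f t')) s).
exact: (le_bigmax _ (fun t' => f s - f t') t).
Qed.

Lemma fspan_ge0 (R : realFieldType) (S : finType) (f : S -> R) : 0 <= fspan f.
Proof. by rewrite /fspan bigmax_idl le_max lexx. Qed.

Lemma sup_norm_le (R : realFieldType) (S : finType) (f : S -> R) (b : R) :
  0 <= b -> (forall s, `|f s| <= b) -> sup_norm f <= b.
Proof. by move=> b0 fb; apply: bigmax_le. Qed.

(* Only the lower half of the contraction property is assumed: the upper half
   follows by exchanging x and y. *)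
Lemma fixpoint_gap (R : realFieldType) (S : finType) (F : (S -> R) -> S -> R)
    (G B : R) (x y : S -> R) :
  G < 1 ->
  (forall x y a, (forall u, a <= x u - y u) -> forall s, G * a <= F x s - F y s) ->
  y = F y -> (forall s, 0 <= x s - F x s <= B) ->
  forall s, 0 <= x s - y s <= (1 - G)^-1 * B.
Proof.
move=> G1 Fcontr yF xF s.
pose d u := x u - y u.
have dF u : d u = (x u - F x u) + (F x u - F y u) by rewrite /d {1}yF; ring.
have [tm _ dm] := arg_minP d (isT : predT s).
have [tM _ dM] := arg_maxP d (isT : predT s).
have lo := Fcontr x y (d tm) (fun u => dm u isT).
have up : forall u, G * - d tM <= F y u - F x u.
  by apply: Fcontr => u; move: (dM u isT); rewrite /d /=; lra.
have G1' : 0 < 1 - G by rewrite subr_gt0.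
have dm0 : 0 <= d tm.
  rewrite -(pmulr_lge0 _ G1'); have /andP[xF0 _] := xF tm.
  by move: (dF tm) (lo tm); lra.
have dMB : d tM <= (1 - G)^-1 * B.
  rewrite ler_pdivlMl //; have /andP[_ xFB] := xF tM.
  by move: (dF tM) (up tM); lra.
apply/andP; split; first exact: le_trans dm0 (dm s isT).
exact: le_trans (dM s isT) dMB.
Qed.

Section MDP.
Variables (R : realFieldType) (S A : finType) (M : mdp R S A).
Local Notation g := (gamma M).

Lemma qvalB (x y : S -> R) (s : S) (a : A) :
  qval M x s a - qval M y s a = g * \sum_u trans M s a u * (x u - y u).
Proof.
rewrite /qval; under [X in _ = _ * X]eq_bigr do rewrite mulrBr.
rewrite sumrB; ring.
Qed.

Lemma Tpi_le_opt (vstar : S -> R) (pi : S -> A) (s : S) :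
  is_optimal_value M vstar -> Tpi M pi vstar s <= vstar s.
Proof. by move=> Hopt; apply: (Hopt s).2. Qed.

Hypothesis HM : is_mdp M.

Let trans_ge0 s a u : 0 <= trans M s a u. Proof. by case: HM. Qed.
Let trans_sum1 s a : \sum_u trans M s a u = 1. Proof. by case: HM => _ []. Qed.
Let gamma_ge0 : 0 <= g. Proof. by case: HM => _ [_ []]. Qed.

Lemma TpiB_ge (pi : S -> A) (x y : S -> R) (a : R) :
  (forall u, a <= x u - y u) -> forall s, g * a <= Tpi M pi x s - Tpi M pi y s.
Proof. by move=> xy s; rewrite /Tpi qvalB ler_wpM2l // avg_ge. Qed.

Lemma TcycleB_ge (pi : nat -> S -> A) (k m i : nat) (x y : S -> R) (a : R) :
  (forall u, a <= x u - y u) ->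
  forall s, g ^+ i * a <= Tcycle M pi k m i x s - Tcycle M pi k m i y s.
Proof.
move=> xy; elim: i => [|i IH] s /=; first by rewrite mul1r.
by rewrite exprS -mulrA; apply: TpiB_ge.
Qed.

Lemma Tcycle_le_opt (pi : nat -> S -> A) (k m i : nat) (vstar : S -> R) :
  is_optimal_value M vstar -> forall s, Tcycle M pi k m i vstar s <= vstar s.
Proof.
move=> Hopt; elim: i => [|i IH] s //=.
apply: le_trans (Tpi_le_opt _ s Hopt); rewrite -subr_ge0.
by rewrite -[0](mulr0 g); apply: TpiB_ge => u; rewrite subr_ge0.
Qed.

Lemma gap_step (vstar x w w' : S -> R) (pi : S -> A) (c : R) :
  is_optimal_value M vstar -> greedy M pi x ->
  (forall u, Tpi M pi w u <= w' u) ->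
  (forall u u', vstar u - x u + (x u' - w u') <= c) ->
  forall s t, vstar s - Tpi M pi x s + (Tpi M pi x t - w' t) <= g * c.
Proof.
move=> Hopt Hgr ww' Hc s t.
have [[a va] _] := Hopt s.
have gap_s : vstar s - Tpi M pi x s <= g * \sum_u trans M s a u * (vstar u - x u).
  by rewrite -qvalB -va; move: ((Hgr s).2 a); lra.
have gap_t : Tpi M pi x t - w' t <= g * \sum_u trans M t (pi t) u * (x u - w u).
  by rewrite -qvalB; move: (ww' t); rewrite /Tpi; lra.
have := avg2_le (trans_ge0 s a) (trans_sum1 s a)
  (trans_ge0 t (pi t)) (trans_sum1 t (pi t)) Hc.
by move/(ler_wpM2l gamma_ge0); rewrite mulrDr; lra.
Qed.

Section AVIRun.
Variables (k m : nat) (v : nat -> S -> R) (pi : nat -> S -> A).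
Variables (eps : nat -> S -> R) (vstar : S -> R).
Hypotheses (Havi : avi_run M k v pi eps) (Hopt : is_optimal_value M vstar).

Local Notation epsilon := (\big[Num.max/0]_(1 <= j < k) fspan (eps j)).
Local Notation D := (fspan (fun s => vstar s - v 0%N s)).

Definition partial_cycle (j : nat) : S -> R := Tcycle M pi k m (j - (k - m)) vstar.

Lemma partial_cycle_step (j : nat) (u : S) :
  Tpi M (pi j.+1) (partial_cycle j) u <= partial_cycle j.+1 u.
Proof.
rewrite /partial_cycle; case: (ltnP j (k - m)) => Hj.
  have [-> ->] : (j.+1 - (k - m) = 0 /\ j - (k - m) = 0)%N by lia.
  exact: Tpi_le_opt.
have -> : (j.+1 - (k - m) = (j - (k - m)).+1)%N by lia.
by rewrite /= (_ : k - m + 1 + _ = j.+1)%N //; lia.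
Qed.

Let gamma_neq1 : 1 - g != 0.
Proof. by case: HM => _ [_ [_ g1]]; rewrite subr_eq0 eq_sym lt_eqF. Qed.

Lemma avi_gap (j : nat) : (j < k)%N -> forall s t,
  vstar s - v j s + (v j t - partial_cycle j t)
    <= g ^+ j * D + (1 - g ^+ j) / (1 - g) * epsilon.
Proof.
elim: j => [|j IH] jk s t.
  rewrite /partial_cycle sub0n expr0 subrr !mul0r addr0 mul1r.
  by move: (le_fspan (fun s => vstar s - v 0%N s) s t) => /=; lra.
have jk' : (j < k)%N by lia.
have eps_t_s : eps j.+1 t - eps j.+1 s <= epsilon.
  apply: le_trans (le_fspan _ t s) _.
  by apply: (le_bigmax_seq 0 j.+1 xpredT) => //; rewrite mem_index_iota; lia.
have step := gap_step Hopt (Havi.1 j jk') (@partial_cycle_step j) (IH jk') s t.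
have geom : g * (g ^+ j * D + (1 - g ^+ j) / (1 - g) * epsilon) + epsilon
    = g ^+ j.+1 * D + (1 - g ^+ j.+1) / (1 - g) * epsilon.
  by rewrite exprS; field.
by rewrite (Havi.2 j jk) -geom; lra.
Qed.

Lemma avi_cycle_gap : (1 <= k)%N -> (m <= k)%N -> forall s,
  vstar s - Tcycle M pi k m m vstar s
    <= (g - g ^+ k) / (1 - g) * epsilon + g ^+ k * D.
Proof.
move=> k1 mk s.
have -> : Tcycle M pi k m m vstar = partial_cycle k.
  by rewrite /partial_cycle (_ : k - (k - m) = m)%N //; lia.
have k1' : (k.-1 < k)%N by lia.
have := gap_step Hopt (Havi.1 _ k1') (@partial_cycle_step k.-1) (avi_gap k1') s s.
have gk : g ^+ k = g * g ^+ k.-1 by rewrite -exprS prednK.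
rewrite prednK // gk.
have -> : g * (g ^+ k.-1 * D + (1 - g ^+ k.-1) / (1 - g) * epsilon)
    = (g - g * g ^+ k.-1) / (1 - g) * epsilon + g * g ^+ k.-1 * D by field.
lra.
Qed.

End AVIRun.

End MDP.

Theorem theorem2 (R : realFieldType) (S A : finType) (M : mdp R S A)
  (k m : nat) (v : nat -> S -> R) (pi : nat -> S -> A) (eps : nat -> S -> R)
  (vstar vpi : S -> R) :
  is_mdp M ->
  (1 <= k)%N -> (1 <= m)%N -> (m <= k)%N ->
  avi_run M k v pi eps ->
  is_optimal_value M vstar ->
  is_periodic_value M pi k m vpi ->
  let epsilon := \big[Num.max/0]_(1 <= j < k) fspan (eps j) in
  let g := gamma M in
  sup_norm (fun s => vstar s - vpi s)
    <= (1 - g ^+ m)^-1 *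
       ((g - g ^+ k) / (1 - g) * epsilon + g ^+ k * fspan (fun s => vstar s - v 0%N s)).
Proof.
move=> HM k1 m1 mk Havi Hopt Hper; cbv zeta.
set epsilon := \big[Num.max/0]_(1 <= j < k) _; set g := gamma M.
have [_ [_ [g0 g1]]] := HM; rewrite -/g in g0 g1; have g1' := ltW g1.
have gm1 : g ^+ m < 1 by rewrite exprn_ilt1 // -lt0n.
set B := (g - g ^+ k) / (1 - g) * epsilon + _.
have cycle_gap s : 0 <= vstar s - Tcycle M pi k m m vstar s <= B.
  by rewrite subr_ge0 Tcycle_le_opt //=; exact: (avi_cycle_gap HM Havi Hopt k1 mk).
have gap := fixpoint_gap gm1 (TcycleB_ge HM pi k m m) Hper cycle_gap.
have B0 : 0 <= B.
  have gk : g ^+ k <= g by rewrite -{2}(expr1 g) ler_wiXn2l.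
  have eps0 : 0 <= epsilon by rewrite /epsilon bigmax_idl le_max lexx.
  by rewrite addr_ge0 // ?mulr_ge0 ?divr_ge0 ?exprn_ge0 ?fspan_ge0 ?invr_ge0 ?subr_ge0.
apply: sup_norm_le => [|s]; first by rewrite mulr_ge0 // invr_ge0 subr_ge0 ltW.
by have /andP[d0 dB] := gap s; rewrite ger0_norm.
Qed.
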